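(* Let $G$ be a connected 2-walk-regular graph that is neither bipartite nor complete multipartite. Then the canonical vector coloring of $G$ is locally injective.
   Context: With $A$ the adjacency matrix and $\circ$ the entrywise product, $G$ is 1-walk-regular if for all $\ell\in\mathbb{N}$ there are constants $a_\ell,b_\ell$ with $A^\ell\circ I=a_\ell I$ and $A^\ell\circ A=b_\ell A$; it is 2-walk-regular if additionally there are constants $c_\ell$ with $A^\ell\circ A_2=c_\ell A_2$ for all $\ell$, where $A_2$ is the adjacency matrix of the graph joining vertices at distance exactly 2 in $G$. Canonical vector coloring: for $G$ on $n$ vertices whose least adjacency eigenvalue has multiplicity $d$, take an $n\times d$ matrix $Q$ whose columns form an orthonormal basis of the least eigenspace and assign to vertex $i$ the vector $\sqrt{n/d}$ times the $i$-th row of $Q$. A vector assignment is locally injective if no two distinct vertices with a common neighbor receive the same vector. *)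

From HB Require Import structures.
From mathcomp Require Import all_boot all_order all_algebra.
From mathcomp Require Import reals.
Set Implicit Arguments. Unset Strict Implicit. Unset Printing Implicit Defensive.
Import Order.TTheory GRing.Theory Num.Theory.
Local Open Scope ring_scope.

Section Defs.
Variable R : realType.
Variable n : nat.

Definition simple_graph (e : rel 'I_n) : Prop :=
  symmetric e /\ irreflexive e.

Definition adjmx (e : rel 'I_n) : 'M[R]_n := \matrix_(i, j) (e i j)%:R.

Definition dist2 (e : rel 'I_n) : rel 'I_n :=
  fun i j => [&& i != j, ~~ e i j & [exists k, e i k && e k j]].

Definition adjmx2 (e : rel 'I_n) : 'M[R]_n := \matrix_(i, j) (dist2 e i j)%:R.

Definition hadamard (A B : 'M[R]_n) : 'M[R]_n := \matrix_(i, j) (A i j * B i j).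

Definition two_walk_regular (e : rel 'I_n) : Prop :=
  forall l : nat, exists a b c : R,
    [/\ hadamard (adjmx e ^+ l) 1%:M = a%:M,
        hadamard (adjmx e ^+ l) (adjmx e) = b *: adjmx e &
        hadamard (adjmx e ^+ l) (adjmx2 e) = c *: adjmx2 e].

Definition connected_graph (e : rel 'I_n) : Prop := forall i j, connect e i j.

Definition bipartite (e : rel 'I_n) : Prop :=
  exists f : 'I_n -> bool, forall i j, e i j -> f i != f j.

(* complete multipartite: vertices partitioned into parts, two vertices
   adjacent iff in different parts (includes complete graphs) *)
Definition complete_multipartite (e : rel 'I_n) : Prop :=
  exists f : 'I_n -> nat, forall i j, e i j = (f i != f j).

Definition least_eigenvalue (A : 'M[R]_n) (theta : R) : Prop :=
  eigenvalue A theta /\ forall mu, eigenvalue A mu -> theta <= mu.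

Definition orthonormal_eigenbasis (A : 'M[R]_n) (theta : R) d (Q : 'M[R]_(n, d)) :
  Prop := Q^T *m Q = 1%:M /\ (Q^T == eigenspace A theta)%MS.

Definition canonical_coloring d (Q : 'M[R]_(n, d)) (i : 'I_n) : 'rV[R]_d :=
  Num.sqrt (n%:R / d%:R) *: row i Q.

Definition locally_injective (e : rel 'I_n) d (phi : 'I_n -> 'rV[R]_d) : Prop :=
  forall i j k, i != j -> e i k -> e j k -> phi i != phi j.

End Defs.

From HB Require Import structures.
From mathcomp Require Import all_boot all_order all_algebra.
From mathcomp Require Import reals complex spectral sesquilinear ring.
Import Order.TTheory GRing.Theory Num.Theory.
Local Open Scope ring_scope.
Set Implicit Arguments. Unset Strict Implicit. Unset Printing Implicit Defensive.

(* Let G = Q Q^T be the Gram matrix of the canonical colouring (up to a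
   positive factor). It is the orthogonal projection onto the theta-eigenspace,
   hence a polynomial in A, so by 2-walk-regularity it is constant on the
   diagonal, on the edges and on the pairs at distance 2. Since the squared
   distance between the vectors of i and j is G_ii + G_jj - 2 G_ij, whether two
   vertices collide depends only on whether they are adjacent or at distance 2.
   Adjacent vertices never collide: otherwise all vectors coincide by
   connectivity, the all-ones vector lies in the theta-eigenspace and theta >= 0,
   whereas theta < 0 because A is symmetric, traceless and nonzero. If vertices
   at distance 2 collided, the colouring would be proper and constant on every
   distance-2 pair; as A^2 is constant on edges, either no edge or every edge
   lies in a triangle, which makes the graph bipartite, resp. complete
   multipartite. *)

Section RealSymmetricSpectrum.
Variables (R : rcfType) (n : nat) (A : 'M[R]_n).
Hypothesis Asym : A^T = A.

Local Notation AC := (map_mx (real_complex R) A).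
Local Notation D := (spectral_diag AC).

Lemma eigenvalue_map_real_complex (x : R) : eigenvalue AC x%:C%C -> eigenvalue A x.
Proof.
by rewrite !eigenvalue_root_char -map_char_poly (fmorph_root (real_complex R)).
Qed.

Lemma realsym_hermsymmx : AC \is hermsymmx.
Proof.
apply: realsym_hermsym.
  apply/is_hermitianmxP; rewrite expr0 scale1r.
  by apply/matrixP=> i j; rewrite !mxE -[in RHS]Asym mxE.
by apply/mxOverP=> i j; rewrite mxE; apply/complex_realP; exists (A i j).
Qed.

Lemma realsym_spectral_diagE :
  AC = invmx (spectralmx AC) *m diag_mx D *m spectralmx AC.
Proof. exact/orthomx_spectralP/hermitian_normalmx/realsym_hermsymmx. Qed.

Lemma realsym_spectral_diag_eigenvalue j :
  exists2 x : R, D 0 j = x%:C%C & eigenvalue A x.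
Proof.
have [x Dx] : exists x : R, D 0 j = x%:C%C.
  exact/complex_realP/(mxOverP (hermitian_spectral_diag_real realsym_hermsymmx)).
exists x => //; apply: eigenvalue_map_real_complex; rewrite -Dx.
set M := spectralmx AC; have Mu : M \in unitmx by exact: spectral_unit.
apply/eigenvalueP; exists (row j M).
  have : M *m AC = diag_mx D *m M.
    by rewrite {1}realsym_spectral_diagE !mulmxA mulmxV // mul1mx.
  by move/(congr1 (row j)); rewrite !row_mul row_diag_mx -scalemxAl -rowE.
apply/eqP => r0; have /rowP/(_ j) := congr1 (row j) (mulmxV Mu).
by rewrite row_mul r0 mul0mx !mxE eqxx => /eqP; rewrite eq_sym oner_eq0.
Qed.

Lemma realsym_eq0_of_eigenvalue_ge0_trace0 :
  (forall mu, eigenvalue A mu -> 0 <= mu) -> \tr A = 0 -> A = 0.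
Proof.
move=> eig_ge0 trA0.
have trD : \sum_j complex.Re (D 0 j) = 0.
  have : \tr AC = \tr (diag_mx D).
    rewrite {1}realsym_spectral_diagE mxtrace_mulC mulmxA.
    by rewrite mulmxV ?spectral_unit ?mul1mx.
  rewrite trace_map_mx trA0 rmorph0 mxtrace_diag => /(congr1 (@complex.Re R)).
  by rewrite raddf_sum /= => <-.
have D0 : D = 0.
  have Re_ge0 i : true -> 0 <= complex.Re (D 0 i).
    by have [y -> /eig_ge0] := realsym_spectral_diag_eigenvalue i.
  apply/rowP=> j; have [x Dx _] := realsym_spectral_diag_eigenvalue j.
  by have := psumr_eq0P Re_ge0 trD (i := j) isT; rewrite mxE Dx /= => ->.
apply/matrixP=> i j; have /matrixP/(_ i j) := realsym_spectral_diagE.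
have -> : diag_mx D = 0 by apply/matrixP=> k l; rewrite D0 !mxE mul0rn.
by rewrite mulmx0 mul0mx !mxE => /complexI.
Qed.

Lemma realsym_eigenvalue_lower_bound_lt0 th : \tr A = 0 -> A != 0 ->
  (forall mu, eigenvalue A mu -> th <= mu) -> th < 0.
Proof.
move=> trA0 Anz th_le; rewrite ltNge; apply: contra Anz => th_ge0.
apply/eqP/realsym_eq0_of_eigenvalue_ge0_trace0 => // mu /th_le; exact: le_trans.
Qed.

End RealSymmetricSpectrum.

Section GramOfEigenbasis.
Variable R : realFieldType.

Lemma mulmx_tr_eq0 m p (X : 'M[R]_(m, p)) : X *m X^T = 0 -> X = 0.
Proof.
move=> XXt0; apply/matrixP => i k; rewrite mxE.
have /matrixP/(_ i i) := XXt0; rewrite !mxE => sum0.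
have sqr_ge0 j : true -> 0 <= X i j * X^T j i by rewrite mxE -expr2 sqr_ge0.
have /eqP := psumr_eq0P sqr_ge0 sum0 (i := k) isT.
by rewrite mxE mulf_eq0 orbb => /eqP.
Qed.

Lemma symmx_mulmx_expn_eq0 n m k (B : 'M[R]_n) (N : 'M[R]_(m, n)) :
  B^T = B -> N *m B ^+ k = 0 -> N *m B = 0.
Proof.
move=> Bsym; case: k => [|k].
  by rewrite expr0 -idmxE mulmx1 => ->; rewrite mul0mx.
elim: k N => [|k IH] N; first by rewrite expr1.
move=> NB0; apply: IH; apply: mulmx_tr_eq0.
rewrite exprSr -mulmxE mulmxA trmx_mul Bsym !mulmxA.
have -> : N *m B ^+ k *m B *m B = N *m B ^+ k.+2.
  by rewrite -!mulmxA !mulmxE mulrA -!exprSr.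
by rewrite NB0 mul0mx.
Qed.

Lemma mulmx_horner_mx_eigen n m (A : 'M[R]_n.+1) th (N : 'M[R]_(m, n.+1)) p :
  N *m A = th *: N -> N *m horner_mx A p = p.[th] *: N.
Proof.
move=> NA; elim/poly_ind: p => [|p c IH].
  by rewrite rmorph0 mulmx0 horner0 scale0r.
rewrite rmorphD rmorphM /= horner_mx_X horner_mx_C mulmxDr -mulmxE mulmxA IH.
by rewrite -scalemxAl NA scalerA mul_mx_scalar hornerMXaddC scalerDl.
Qed.

(* If char_poly A = q ('X - th)^m with q.[th] != 0, then by symmetry
   q(A) (A - th) = 0, and q(A) / q.[th] is the projection onto the eigenspace. *)
Lemma gram_eigenbasis_horner n d (A : 'M[R]_n.+1) th (Q : 'M[R]_(n.+1, d)) :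
  A^T = A -> Q^T *m Q = 1%:M -> (Q^T == eigenspace A th)%MS ->
  exists p, Q *m Q^T = horner_mx A p.
Proof.
move=> Asym QtQ /andP[sQE sEQ].
have [m [q /implyP/(_ (monic_neq0 (char_poly_monic A))) q_th chiE]] :=
  multiplicity_XsubC (char_poly A) th.
set B := horner_mx A ('X - th%:P).
have BE : B = A - th%:M by rewrite /B rmorphB /= horner_mx_X horner_mx_C.
have Bsym : B^T = B by rewrite BE linearB /= Asym tr_scalar_mx.
have qB0 : horner_mx A q *m B = 0.
  apply: (@symmx_mulmx_expn_eq0 _ _ m) => //.
  by rewrite -rmorphXn mulmxE -rmorphM -chiE; exact: Cayley_Hamilton.
pose P := q.[th]^-1 *: horner_mx A q.
have PtB0 : P^T *m B = 0.
  rewrite -Bsym -trmx_mul -scalemxAr mulmxE comm_horner_mx2 -mulmxE qB0.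
  by rewrite scaler0 trmx0.
have [X PtE] : exists X, P^T = X *m Q^T.
  apply/submxP/(submx_trans _ sEQ); rewrite /eigenspace; apply/sub_kermxP.
  by rewrite -BE PtB0.
have QtP : Q^T *m P = Q^T.
  rewrite -scalemxAr (mulmx_horner_mx_eigen _ (eigenspaceP sQE)) scalerA mulVf //.
  by rewrite scale1r.
have PE : P = Q *m X^T by rewrite -[P]trmxK PtE trmx_mul trmxK.
exists (q.[th]^-1 *: q); rewrite horner_mxZ -/P.
by rewrite [in RHS]PE -[X^T]mul1mx -QtQ -mulmxA -PE QtP.
Qed.

End GramOfEigenbasis.

Lemma horner_mx_sum (R : comNzRingType) n (A : 'M[R]_n.+1) (p : {poly R}) :
  horner_mx A p = \sum_(l < size p) p`_l *: A ^+ l.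
Proof.
rewrite -{1}[p]coefK poly_def rmorph_sum; apply: eq_bigr => l _.
rewrite -mul_polyC rmorphM /= horner_mx_C rmorphXn /= horner_mx_X.
by rewrite [_ * _]mul_scalar_mx.
Qed.

Section DistanceTwoConstant.
Variables (R : realType) (n : nat) (e : rel 'I_n).

Definition dist2_const (M : 'M[R]_n) : Prop := exists a b c : R,
  [/\ forall i, M i i = a, forall i j, e i j -> M i j = b
    & forall i j, dist2 e i j -> M i j = c].

Lemma dist2_const_lincomb I (r : seq I) (c : I -> R) (F : I -> 'M[R]_n) :
  (forall i, dist2_const (F i)) -> dist2_const (\sum_(i <- r) c i *: F i).
Proof.
move=> FP; elim: r => [|x r [a [b [g [Ha Hb Hg]]]]].
  by exists 0, 0, 0; split=> *; rewrite big_nil mxE.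
have [a' [b' [g' [Ha' Hb' Hg']]]] := FP x.
exists (c x * a' + a), (c x * b' + b), (c x * g' + g).
by split=> [i|i j eij|i j dij]; rewrite big_cons !mxE;
  [rewrite Ha Ha' | rewrite Hb ?Hb' | rewrite Hg ?Hg'].
Qed.

Lemma two_walk_regular_expn l :
  two_walk_regular R e -> dist2_const (adjmx R e ^+ l).
Proof.
move=> /(_ l) [a [b [c [HI HA HA2]]]]; exists a, b, c; split.
- by move=> i; have /matrixP/(_ i i) := HI; rewrite !mxE eqxx mulr1.
- move=> i j eij; have /matrixP/(_ i j) := HA.
  by rewrite !mxE eij => /(mulIf (oner_neq0 R)).
- move=> i j dij; have /matrixP/(_ i j) := HA2.
  by rewrite !mxE dij => /(mulIf (oner_neq0 R)).
Qed.

Lemma adjmx_sqr_neq0 i j :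
  ((adjmx R e ^+ 2) i j != 0) = [exists k, e i k && e k j].
Proof.
rewrite expr2 -mulmxE mxE.
under eq_bigr => k _ do rewrite !mxE -natrM mulnb.
rewrite -natr_sum pnatr_eq0 sum_nat_eq0 negb_forall.
by apply: eq_existsb => k; case: (_ && _).
Qed.

Lemma two_walk_regular_triangles x y u v : two_walk_regular R e ->
  e x y -> e u v -> [exists k, e x k && e k y] -> [exists k, e u k && e k v].
Proof.
move=> /(two_walk_regular_expn 2) [_ [b [_ [_ Hb _]]]] exy euv.
by rewrite -!adjmx_sqr_neq0 !Hb.
Qed.

End DistanceTwoConstant.

Lemma two_walk_regular_horner (R : realType) n (e : rel 'I_n.+1) p :
  two_walk_regular R e -> dist2_const e (horner_mx (adjmx R e) p).
Proof.
move=> twr; rewrite horner_mx_sum; apply: dist2_const_lincomb => l.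
exact: two_walk_regular_expn.
Qed.

Lemma connected_graph_ind n (e : rel 'I_n) (S : 'I_n -> Prop) i0 :
  connected_graph e -> S i0 -> (forall x y, S x -> e x y -> S y) -> forall v, S v.
Proof.
move=> conn S0 Se v; have /connectP [p pth ->] := conn i0 v.
by elim: p i0 S0 pth => [|y p IH] x Sx //= /andP [/(Se _ _ Sx) Sy /(IH _ Sy)].
Qed.

Section ProperDistanceTwoColoring.
Variables (n : nat) (e : rel 'I_n) (T : eqType) (r : 'I_n -> T).
Hypotheses (esym : symmetric e) (conn : connected_graph e)
  (r_adj : forall i j, e i j -> r i != r j)
  (r_dist2 : forall i j, dist2 e i j -> r i = r j).

Lemma common_neighbor_color i j k : i != j -> ~~ e i j -> e i k -> e k j -> r i = r j.
Proof.
move=> nij neij eik ekj; apply: r_dist2; rewrite /dist2 nij neij /=.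
by apply/existsP; exists k; rewrite eik ekj.
Qed.

Lemma triangle_free_bipartite :
  (forall i j k, e i j -> e j k -> ~~ e i k) -> bipartite e.
Proof.
move=> tri_free.
(* Neighbours of a common vertex are at distance 2, so colours alternate along
   walks between the two colours of any fixed edge. *)
have nbr_color x y z : e x y -> e x z -> r y = r z.
  move=> exy exz; have [->//|nyz] := eqVneq y z.
  have eyx : e y x by rewrite esym.
  exact: common_neighbor_color nyz (tri_free _ _ _ eyx exz) eyx exz.
have [[v0 v1] /= e01|no_edge] := pickP (fun p : 'I_n * 'I_n => e p.1 p.2).
  2: by exists (fun=> true) => i j; rewrite (no_edge (i, j)).
pose two_colored x := r x \in [:: r v0; r v1].
have two_col : forall x, two_colored x /\ forall y, e x y -> two_colored y.
  apply: (connected_graph_ind conn (i0 := v0)).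
    split=> [|y ey]; rewrite /two_colored ?(nbr_color _ _ _ ey e01);
    by rewrite !inE eqxx ?orbT.
  move=> x z [Cx Hx] exz; split=> [|y ezy]; first exact: Hx.
  have ezx : e z x by rewrite esym.
  by rewrite /two_colored (nbr_color z y x ezy ezx).
exists (fun v => r v == r v0) => i j /r_adj.
have [+ _] := two_col i; have [+ _] := two_col j; rewrite /two_colored !inE.
by do 2 case/orP=> /eqP->; rewrite ?eqxx // => /negbTE; rewrite eq_sym => ->.
Qed.

(* Were w at distance 3 from i, a triangle a c b would give r a = r w = r c. *)
Lemma edge_triangle_ball2_closed i a b w :
  (forall x y, e x y -> [exists k, e x k && e k y]) ->
  e i a -> e a b -> e b w -> [|| w == i, e i w | [exists k, e i k && e k w]].
Proof.
move=> tri eia eab ebw; apply/negPn/negP.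
rewrite !negb_or negb_exists => /and3P[_ neiw /forallP not_mid].
have neaw : ~~ e a w by have := not_mid a; rewrite eia.
have nib : i != b by apply: contraNneq neiw => ->.
have neib : ~~ e i b by have := not_mid b; rewrite ebw andbT.
have rib := common_neighbor_color nib neib eia eab.
have [c /andP[eac ecb]] := existsP (tri _ _ eab).
have eic : e i c.
  apply: contraT => neic; have nic : i != c by apply: contraNneq neib => ->.
  by have := r_adj ecb; rewrite -(common_neighbor_color nic neic eia eac) rib eqxx.
have ncw : c != w by apply: contraNneq neiw => <-.
have necw : ~~ e c w by have := not_mid c; rewrite eic.
have naw : a != w by apply: contraNneq neiw => <-.
have := r_adj eac; rewrite (common_neighbor_color naw neaw eab ebw).
by rewrite (common_neighbor_color ncw necw ecb ebw) eqxx.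
Qed.

Lemma edge_triangle_dist2 i j :
  (forall x y, e x y -> [exists k, e x k && e k y]) ->
  i != j -> ~~ e i j -> dist2 e i j.
Proof.
move=> tri nij neij; rewrite /dist2 nij neij /=.
pose ball2 v := [|| v == i, e i v | [exists k, e i k && e k v]].
suff: ball2 j by rewrite /ball2 eq_sym (negbTE nij) (negbTE neij).
apply: (connected_graph_ind (S := ball2) (i0 := i) conn).
  by rewrite /ball2 eqxx.
move=> b w /or3P[/eqP-> | eib | /existsP[a /andP[eia eab]]] ebw.
- by rewrite /ball2 ebw orbT.
- rewrite /ball2; case: (w == i) (e i w) => [|[]] //=.
  by apply/existsP; exists b; rewrite eib.
- exact: edge_triangle_ball2_closed eia eab ebw.
Qed.

Lemma edge_triangle_complete_multipartite :
  (forall x y, e x y -> [exists k, e x k && e k y]) -> complete_multipartite e.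
Proof.
move=> tri; pose s := map r (enum 'I_n).
have r_in_s v : r v \in s by rewrite map_f ?mem_enum.
exists (fun v => index (r v) s) => i j.
rewrite (inj_in_eq (@index_inj _ (r i) s)) ?r_in_s //.
have [eij|neij] := boolP (e i j); first by rewrite r_adj.
have [->|nij] := eqVneq i j; first by rewrite eqxx.
by rewrite (r_dist2 (edge_triangle_dist2 tri nij neij)) eqxx.
Qed.

Lemma bipartite_or_complete_multipartite :
  (forall x y u v, e x y -> e u v ->
     [exists k, e x k && e k y] -> [exists k, e u k && e k v]) ->
  bipartite e \/ complete_multipartite e.
Proof.
move=> tri_uniform.
have [/existsP[x /existsP[y /andP[exy txy]]] | no_tri] :=
  boolP [exists x, exists y, e x y && [exists k, e x k && e k y]].
  right; apply: edge_triangle_complete_multipartite => u v euv.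
  exact: tri_uniform exy euv txy.
left; apply: triangle_free_bipartite => a b c eab ebc; apply/negP => eac.
move/negP: no_tri; apply; apply/existsP; exists a; apply/existsP; exists c.
by rewrite eac; apply/existsP; exists b; rewrite eab.
Qed.

End ProperDistanceTwoColoring.

Section GramRows.
Variables (R : realFieldType) (n d : nat) (Q : 'M[R]_(n, d)).
Local Notation G := (Q *m Q^T).

Lemma row_eq_gram i j : (row i Q == row j Q) = (G i i + G j j - G i j *+ 2 == 0).
Proof.
have -> : G i i + G j j - G i j *+ 2 = \sum_k (Q i k - Q j k) ^+ 2.
  rewrite !mxE -sumrMnl -big_split /= -sumrB.
  by apply: eq_bigr => k _; rewrite !mxE; ring.
rewrite psumr_eq0 => [|k _]; last exact: sqr_ge0.
apply/eqP/allP => [/rowP eq_ij k _ /=|/= eq_ij].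
  by have := eq_ij k; rewrite !mxE => ->; rewrite subrr expr0n.
apply/rowP => k; have := eq_ij k (mem_index_enum k).
by rewrite /= !mxE sqrf_eq0 subr_eq0 => /eqP.
Qed.

Lemma gram_const_row_eq (E : rel 'I_n) a b x y u v :
  (forall i, G i i = a) -> (forall i j, E i j -> G i j = b) ->
  E x y -> E u v -> row x Q = row y Q -> row u Q = row v Q.
Proof.
move=> Ga Gb Exy Euv /eqP; rewrite !row_eq_gram !Ga Gb // => eq_ab.
by apply/eqP; rewrite row_eq_gram !Ga Gb.
Qed.

Lemma const_rows_left_eigenvalue_ge0 (A : 'M[R]_n) th : (0 < d)%N ->
  (forall i j, 0 <= A i j) -> (forall i j, row i Q = row j Q) ->
  Q^T *m Q = 1%:M -> Q^T *m A = th *: Q^T -> 0 <= th.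
Proof.
move=> d_gt0 A_ge0 Qrows QtQ QtA; rewrite leNgt; apply/negP => th_lt0.
pose l : 'I_d := Ordinal d_gt0.
have Qcol0 j : Q j l = 0.
  have Qvl v : Q v l = Q j l by have /rowP/(_ l) := Qrows v j; rewrite !mxE.
  have /matrixP/(_ l j) := QtA; rewrite !mxE.
  under eq_bigr => v _ do rewrite mxE Qvl.
  rewrite -mulr_sumr mulrC => /eqP; rewrite -subr_eq0 -mulrBl mulf_eq0.
  case/orP => [|/eqP//].
  rewrite subr_eq0 => /eqP sum_eq_th; move: th_lt0; rewrite -sum_eq_th ltNge.
  by rewrite sumr_ge0.
have /matrixP/(_ l l) := QtQ; rewrite !mxE eqxx.
by rewrite big1 => [/eqP|v _]; rewrite ?mxE ?Qcol0 ?mul0r // eq_sym oner_eq0.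
Qed.

End GramRows.

Lemma connected_gram_rows_eq (R : realFieldType) n d (e : rel 'I_n)
    (Q : 'M[R]_(n, d)) a b x y :
  connected_graph e -> (forall i, (Q *m Q^T) i i = a) ->
  (forall i j, e i j -> (Q *m Q^T) i j = b) ->
  e x y -> row x Q = row y Q -> forall u v, row u Q = row v Q.
Proof.
move=> conn Ga Gb exy Exy.
suff row_x w : row w Q = row x Q by move=> u v; rewrite !row_x.
apply: (connected_graph_ind (S := fun w => row w Q = row x Q) (i0 := x) conn) => //.
move=> u z Eux euz.
by rewrite -Eux (gram_const_row_eq Ga Gb exy euz Exy).
Qed.

Lemma eigenbasis_dim_gt0 (F : fieldType) n (A : 'M[F]_n) th d
    (Q : 'M[F]_(n, d)) :
  eigenvalue A th -> (Q^T == eigenspace A th)%MS -> (0 < d)%N.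
Proof.
rewrite /eigenvalue -mxrank_eq0 -lt0n => rank_gt0 /andP[_ sEQ].
exact: leq_trans rank_gt0 (leq_trans (mxrankS sEQ) (rank_leq_row _)).
Qed.

Lemma canonical_coloring_inj (R : realType) n d (Q : 'M[R]_(n, d)) i j :
  (0 < d)%N ->
  canonical_coloring Q i = canonical_coloring Q j -> row i Q = row j Q.
Proof.
move=> d_gt0; apply: scalerI; rewrite gt_eqF // sqrtr_gt0 divr_gt0 // ltr0n //.
exact: leq_ltn_trans (leq0n i) (ltn_ord i).
Qed.

Section AdjacencyMatrix.
Variables (R : realType) (n : nat) (e : rel 'I_n).

Lemma adjmx_ge0 i j : 0 <= adjmx R e i j.
Proof. by rewrite mxE ler0n. Qed.

Lemma trmx_adjmx : symmetric e -> (adjmx R e)^T = adjmx R e.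
Proof. by move=> esym; apply/matrixP=> i j; rewrite !mxE esym. Qed.

Lemma mxtrace_adjmx : irreflexive e -> \tr (adjmx R e) = 0.
Proof. by move=> eirr; rewrite /mxtrace big1 // => i _; rewrite mxE eirr. Qed.

Lemma adjmx_neq0 : ~ bipartite e -> adjmx R e != 0.
Proof.
move=> nbip; apply/eqP => A0; apply: nbip; exists (fun=> true) => i j eij.
by have /matrixP/(_ i j) := A0; rewrite !mxE eij => /eqP; rewrite oner_eq0.
Qed.

Lemma adjmx_least_eigenvalue_lt0 th :
  simple_graph e -> ~ bipartite e -> least_eigenvalue (adjmx R e) th -> th < 0.
Proof.
move=> [esym eirr] nbip [_ th_le].
apply: (@realsym_eigenvalue_lower_bound_lt0 R _ _ (trmx_adjmx esym) th) th_le.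
  exact: mxtrace_adjmx.
exact: adjmx_neq0.
Qed.

End AdjacencyMatrix.

Lemma gram_dist2_const (R : realType) n (e : rel 'I_n) th d (Q : 'M[R]_(n, d)) :
  symmetric e -> two_walk_regular R e ->
  orthonormal_eigenbasis (adjmx R e) th Q -> dist2_const e (Q *m Q^T).
Proof.
case: n e Q => [|m] e Q esym twr [QtQ QtE]; first by exists 0, 0, 0; split=> -[].
have [p ->] := gram_eigenbasis_horner (trmx_adjmx R esym) QtQ QtE.
exact: two_walk_regular_horner.
Qed.

Theorem lemma4p10 (R : realType) (n : nat) (e : rel 'I_n) :
  simple_graph e ->
  connected_graph e ->
  @two_walk_regular R n e ->
  ~ bipartite e ->
  ~ complete_multipartite e ->
  forall (theta : R), least_eigenvalue (adjmx R e) theta ->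
  forall (d : nat) (Q : 'M[R]_(n, d)),
    orthonormal_eigenbasis (adjmx R e) theta Q ->
    locally_injective e (canonical_coloring Q).
Proof.
move=> [esym eirr] conn twr nbip nmulti th th_least d Q [QtQ QtE].
have th_lt0 := adjmx_least_eigenvalue_lt0 (conj esym eirr) nbip th_least.
have d_gt0 := eigenbasis_dim_gt0 th_least.1 QtE.
have QtA : Q^T *m adjmx R e = th *: Q^T by apply/eigenspaceP; case/andP: QtE.
have [a [b [c [Ga Gb Gc]]]] := gram_dist2_const esym twr (conj QtQ QtE).
have row_adj x y : e x y -> row x Q != row y Q.
  move=> exy; apply/eqP => /(connected_gram_rows_eq conn Ga Gb exy) Qrows.
  have := const_rows_left_eigenvalue_ge0 d_gt0 (@adjmx_ge0 R n e) Qrows QtQ QtA.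
  by rewrite leNgt th_lt0.
move=> i j k nij eik ejk; apply/eqP => /(canonical_coloring_inj d_gt0) Eij.
have neij : ~~ e i j by apply/negP => /(row_adj i j); rewrite Eij eqxx.
have dij : dist2 e i j.
  by rewrite /dist2 nij neij; apply/existsP; exists k; rewrite eik esym.
have row_dist2 x y : dist2 e x y -> row x Q = row y Q.
  by move=> dxy; apply: (gram_const_row_eq Ga Gc dij dxy Eij).
have tri_uniform x y u v := @two_walk_regular_triangles R n e x y u v twr.
by case: (bipartite_or_complete_multipartite esym conn row_adj row_dist2 tri_uniform).
Qed.
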